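(* Let $n\ge2$ and let $\mathfrak G_n$, $\mathcal G_n$, $\iota_n$, $\mathcal N_{0,n}$, $z_g$, $U_m(z_g)$ and $\mathfrak H_{j,n}$ be as in the context. Let $m\ge1$ and let $K\in\{\mathfrak H_{j,n},\ \mathcal N_{0,n}\setminus\mathfrak H_{j,n}: j=0,\dots,2^n-2\}$. Set $$M_K=\Bigl(\bigcap_{g\in K}U_m(z_g)\Bigr)\setminus\bigcup_{h\in\mathcal N_{0,n}\setminus K}U_m(z_h).$$ Then $M_K=\bigcap_{g\in K}U_m(z_g)$.
   Context: Let $X=\{\mathbf 0,\mathbf 1\}$, $X^*$ the finite words (with empty word $\varnothing$), $X^\omega$ the infinite words with the product topology, $C(\eta)=\{\eta w:w\in X^\omega\}$, $\mathbf 1^m$ the word of $m$ ones and $\mathbf 1^\infty$ the infinite word of ones. Fix $n\ge2$, a primitive polynomial $f_n$ of degree $n$ over $\mathbb F_2$ with root $\alpha$ (so $\mathbb F_{2^n}=\mathbb F_2(\alpha)$, $\alpha$ generates $\mathbb F_{2^n}^*$), and $\operatorname{Tr}(\beta)=\beta+\beta^2+\dots+\beta^{2^{n-1}}\in\mathbb F_2$. $\mathfrak G_n$ is the group of automorphisms of the binary rooted tree $X^*$ generated by $a$ ($a\cdot(\mathbf 0w)=\mathbf 1w$, $a\cdot(\mathbf 1w)=\mathbf 0w$) and $\iota_n(\beta)$, $\beta\in\mathbb F_{2^n}$, where $\iota_n(\beta)\cdot(\mathbf 0w)=\mathbf 0(a^{\operatorname{Tr}(\beta)}\cdot w)$ and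 $\iota_n(\beta)\cdot(\mathbf 1w)=\mathbf 1(\iota_n(\alpha\beta)\cdot w)$; $\iota_n$ is an injective homomorphism of $(\mathbb F_{2^n},+)$ into $\mathfrak G_n$ and $e=\iota_n(0)$. Restrictions $g|_x$ are defined by $g\cdot(xw)=(g\cdot x)(g|_x\cdot w)$ and extended to words. Let $\mathcal N_{0,n}=\iota_n(\mathbb F_{2^n})$. For $j=0,\dots,2^n-2$ let $\mathfrak H_{j,n}=\iota_n(\{\beta:\operatorname{Tr}(\alpha^j\beta)=0\})$, a subgroup of order $2^{n-1}$. $\mathcal G_n$ is the groupoid of germs of the action of the inverse semigroup $\{(\eta,g,\mu):\eta,\mu\in X^*,g\in\mathfrak G_n\}\cup\{0\}$ on $X^\omega$, where $(\eta,g,\mu)$ maps $C(\mu)\to C(\eta)$ by $\mu w\mapsto\eta(g\cdot w)$: elements are germs $[(\eta,g,\mu),w]$ with $w\in C(\mu)$, and $[(\eta,g,\mu),w]=[(\eta',g',\mu'),w']$ iff $w=w'$ and there is a finite prefix $\nu$ of $w$ with $\nu=\mu\epsilon=\mu'\epsilon'$, $\eta(g\cdot\epsilon)=\eta'(g'\cdot\epsilon')$ and $g|_\epsilon=g'|_{\epsilon'}$. For $s=(\eta,g,\mu)$ and open $U\subseteq C(\mu)$ let $\Theta(s,U)=\{[s,w]:w\in U\}$; these are open bisections forming a basis of the topology. For $g\in\mathfrak G_n$ let $z_g=[(\varnothing,g,\varnothing),\mathbf 1^\infty]$ and $U_m(z_g)=\Theta((\varnothing,g,\varnothing),C(\mathbf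 1^m))$, a compact open bisection containing $z_g$. *)

From HB Require Import structures.
From mathcomp Require Import all_boot all_algebra.
Set Implicit Arguments. Unset Strict Implicit. Unset Printing Implicit Defensive.
Import GRing.Theory.
Local Open Scope ring_scope.

(* Letters: 0 = false, 1 = true.  Finite words X^* = seq bool,
   infinite words X^omega = nat -> bool. *)
Definition infword := nat -> bool.

Definition inC (eta : seq bool) (w : infword) : Prop :=
  forall i, (i < size eta)%N -> w i = nth false eta i.

Definition pref (w : infword) (k : nat) : seq bool := mkseq w k.

Definition aact (w : seq bool) : seq bool :=
  match w with [::] => [::] | x :: w' => ~~ x :: w' end.

Section Field.
Variables (F : finFieldType) (n : nat) (alpha : F).

Definition tr (b : F) : F := \sum_(i < n) b ^+ (2 ^ i).

Fixpoint iotan (b : F) (w : seq bool) : seq bool :=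
  match w with
  | [::] => [::]
  | false :: w' => false :: (if tr b == 1 then aact w' else w')
  | true :: w' => true :: iotan (alpha * b) w'
  end.

Inductive inG : (seq bool -> seq bool) -> Prop :=
| G_a : inG aact
| G_iota b : inG (iotan b)
| G_comp g h : inG g -> inG h -> inG (g \o h)
| G_inv g h : inG g -> cancel g h -> cancel h g -> inG h
| G_ext g h : inG g -> g =1 h -> inG h.

Definition inN0 (g : seq bool -> seq bool) : Prop := exists b, g =1 iotan b.

(* H_{j,n} as a set of field elements: {beta | Tr(alpha^j beta) = 0} *)
Definition Hset (j : nat) (b : F) : bool := tr (alpha ^+ j * b) == 0.
End Field.

Definition restr (g : seq bool -> seq bool) (x u : seq bool) : seq bool :=
  drop (size x) (g (x ++ u)).

Record triple := Triple { t_eta : seq bool; t_g : seq bool -> seq bool; t_mu : seq bool }.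

Definition germrep := (triple * infword)%type.

Definition valid_germ (G : (seq bool -> seq bool) -> Prop) (r : germrep) : Prop :=
  G (t_g r.1) /\ inC (t_mu r.1) r.2.

Definition germ_eq (r r' : germrep) : Prop :=
  (forall i, r.2 i = r'.2 i) /\
  exists (k : nat) (e e' : seq bool),
    pref r.2 k = t_mu r.1 ++ e /\ pref r.2 k = t_mu r'.1 ++ e' /\
    t_eta r.1 ++ t_g r.1 e = t_eta r'.1 ++ t_g r'.1 e' /\
    (forall u, restr (t_g r.1) e u = restr (t_g r'.1) e' u).

(* z_g = [(empty,g,empty), 1^infty];
   membership of the germ represented by r in U_m(z_g) = Theta((empty,g,empty), C(1^m)) *)
Definition inU (m : nat) (g : seq bool -> seq bool) (r : germrep) : Prop :=
  exists w : infword, inC (nseq m true) w /\ germ_eq r (Triple [::] g [::], w).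

(* A germ in U_m(z_b) and in U_m(z_g) forces iota(b) and iota(g) to agree, together
   with their restrictions, on all long prefixes of its base point w.  If w = 1^p 0 c ...,
   comparing the letter after the first 0 gives Tr(alpha^p b) = Tr(alpha^p g); if
   w = 1^oo, restricting at a prefix 1^k with alpha^k = 1 gives back iota(b) = iota(g)
   and hence Tr(b) = Tr(g).  So a germ in every U_m(z_b), b in K, and in some U_m(z_g),
   g outside K, yields q such that x |-> Tr(alpha^q x) is constant on K with the same
   value at g.  K is the kernel of the F_2-linear form x |-> Tr(alpha^j x) or its
   complement, so the nonzero form x |-> Tr(alpha^q x) would vanish identically. *)

From mathcomp Require Import all_boot all_algebra finfield.
From Stdlib Require Import Classical.
Set Implicit Arguments. Unset Strict Implicit. Unset Printing Implicit Defensive.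
Import GRing.Theory.
Local Open Scope ring_scope.

Section XorFunctionals.
Variables (V : zmodType) (psi phi : V -> bool).
Hypotheses (psiD : {morph psi : x y / x + y >-> x (+) y})
           (phiD : {morph phi : x y / x + y >-> x (+) y}).

Lemma xor_functional_const_on_level_eq0 (c : bool) (k g : V) :
  psi k = c -> psi g != c -> (forall x, psi x = c -> phi x = phi g) ->
  forall x, phi x = false.
Proof.
move=> psik psig phi_const.
have phi_ker y : psi y = false -> phi y = false.
  move=> psiy; have : phi (k + y) = phi k.
    by rewrite (phi_const k psik) phi_const // psiD psik psiy addbF.
  by rewrite phiD; case: (phi k); case: (phi y).
(* translating by [k + g] flips [psi] and preserves [phi] *)
have psikg : psi (k + g) by rewrite psiD psik addbC -negb_eqb.
have phikg : phi (k + g) = false by rewrite phiD (phi_const k psik) addbb.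
move=> x; case psix: (psi x); last exact: phi_ker.
have := phi_ker (x + (k + g)).
by rewrite phiD psiD psix psikg phikg addbF; apply.
Qed.

End XorFunctionals.

Section Trace.
Variables (F : finFieldType) (n : nat).
Hypotheses (n_gt0 : (0 < n)%N) (cardF : #|F| = (2 ^ n)%N).

Lemma pchar2_finField : (2 \in [pchar F])%N.
Proof. exact: card_finPcharP cardF _. Qed.

Lemma trD (x y : F) : tr n (x + y) = tr n x + tr n y.
Proof.
rewrite /tr -big_split /=; apply: eq_bigr => i _.
by rewrite exprDn_pchar // pnatX pnatE // pchar2_finField.
Qed.

Lemma tr_sqr (x : F) : tr n x ^+ 2 = tr n x.
Proof.
rewrite /tr -(pFrobenius_autE pchar2_finField) rmorph_sum /=.
under eq_bigr do rewrite pFrobenius_autE -exprM -expnSr.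
case: n n_gt0 cardF => // n' _ card'.
rewrite big_ord_recr big_ord_recl /= -card' expf_card addrC.
by congr (_ + _); apply: eq_bigr.
Qed.

Lemma tr_0or1 (x : F) : tr n x = 0 \/ tr n x = 1.
Proof.
have : tr n x * (tr n x - 1) = 0 by rewrite mulrBr mulr1 -expr2 tr_sqr subrr.
by move/eqP; rewrite mulf_eq0 subr_eq0 => /orP[/eqP|/eqP]; [left | right].
Qed.

Lemma tr_eq0 (x : F) : (tr n x == 0) = ~~ (tr n x == 1).
Proof. by case: (tr_0or1 x) => ->; rewrite eqxx ?oner_eq0 // eq_sym oner_eq0. Qed.

Lemma tr_eq1D (x y : F) :
  (tr n (x + y) == 1) = (tr n x == 1) (+) (tr n y == 1).
Proof.
have char2 := addrr_pchar2 pchar2_finField.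
rewrite trD; case: (tr_0or1 x) => ->; case: (tr_0or1 y) => ->.
all: by rewrite ?char2 ?addr0 ?add0r ?eqxx // eq_sym oner_eq0.
Qed.

Lemma exists_tr_eq1 : exists y : F, tr n y = 1.
Proof.
(* Tr is a nonzero polynomial of degree 2^(n-1) < #|F|, so some y is not a root. *)
pose P : {poly F} := \sum_(i < n) 'X^(2 ^ i).
have P_tr y : P.[y] = tr n y.
  by rewrite horner_sum; apply: eq_bigr => i _; rewrite hornerXn.
have lt_pred_n : (n.-1 < n)%N by rewrite ltn_predL.
have sizeP : size P = (2 ^ n.-1).+1.
  rewrite /P (bigD1 (Ordinal lt_pred_n)) //= size_polyDl size_polyXn //.
  apply: leq_ltn_trans (size_sum _ _ _) _; rewrite ltnS.
  apply/bigmax_leqP => i /eqP ne_i; rewrite size_polyXn ltn_exp2l //.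
  rewrite ltn_neqAle -ltnS prednK // ltn_ord andbT.
  by apply/eqP => eq_i; apply: ne_i; exact: val_inj.
case: (pickP (fun y : F => tr n y == 1)) => [y /eqP | tr_neq1]; first by exists y.
have P_neq0 : P != 0 by rewrite -size_poly_eq0 sizeP.
have := max_poly_roots P_neq0 (rs := enum F); rewrite enum_uniq.
have -> : all (root P) (enum F).
  by apply/allP => y _; rewrite /root P_tr tr_eq0 tr_neq1.
move=> /(_ isT isT).
by rewrite -cardE cardF sizeP ltnS leqNgt ltn_exp2l ?ltn_predL ?n_gt0.
Qed.

Lemma tr_scale_eq1 (a : F) (c : bool) : a != 0 -> exists x, (tr n (a * x) == 1) = c.
Proof.
move=> a_neq0; case: c.
  have [y tr_y] := exists_tr_eq1.
  by exists (a^-1 * y); rewrite mulrA mulfV // mul1r tr_y eqxx.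
have tr0 : tr n (0 : F) = 0.
  by apply: (@addrI _ (tr n 0)); rewrite -trD !addr0.
by exists 0; rewrite mulr0 tr0 eq_sym oner_eq0.
Qed.

Lemma tr_form_not_const_on_level (a a' : F) (c : bool) (g : F) :
  a != 0 -> a' != 0 -> (tr n (a * g) == 1) != c ->
  ~ (forall x, (tr n (a * x) == 1) = c ->
               (tr n (a' * x) == 1) = (tr n (a' * g) == 1)).
Proof.
move=> a_neq0 a'_neq0 g_off phi_const.
have bitD (b : F) : {morph (fun x => tr n (b * x) == 1) : x y / x + y >-> x (+) y}.
  by move=> x y; rewrite /= mulrDr tr_eq1D.
have [k psik] := tr_scale_eq1 c a_neq0.
have [y phiy] := tr_scale_eq1 true a'_neq0.
have := xor_functional_const_on_level_eq0 (bitD a) (bitD a') psik g_off phi_const y.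
by rewrite /= phiy.
Qed.

End Trace.

Definition tree_morphism (g : seq bool -> seq bool) : Prop :=
  (forall x, size (g x) = size x) /\ (forall k x, take k (g x) = g (take k x)).

Lemma tree_morphism_cat g x u : tree_morphism g -> g (x ++ u) = g x ++ restr g x u.
Proof.
case=> _ g_take.
by rewrite /restr -{1}(cat_take_drop (size x) (g _)) g_take take_size_cat.
Qed.

Lemma restr_cat g x d u : restr g (x ++ d) u = drop (size d) (restr g x (d ++ u)).
Proof. by rewrite /restr -catA drop_drop size_cat addnC. Qed.

Lemma aact_take k x : take k (aact x) = aact (take k x).
Proof. by case: x k => [|c x] [|k]. Qed.

Lemma tree_morphism_aact : tree_morphism aact.
Proof. by split; [case | exact: aact_take]. Qed.

Lemma tree_morphism_iotan (F : finFieldType) n (alpha b : F) :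
  tree_morphism (iotan n alpha b).
Proof.
split=> [x | k x].
  elim: x b => [|[] x IH] b //=; first by rewrite IH.
  by case: ifP => _ //; case: x {IH}.
elim: x k b => [|[] x IH] [|k] b //=; first by rewrite IH.
by case: ifP => _ //; rewrite aact_take.
Qed.

Lemma tree_morphism_inG (F : finFieldType) n (alpha : F) g :
  inG n alpha g -> tree_morphism g.
Proof.
elim=> {g} [| b | g h _ [sg tg] _ [sh th] | g h _ [sg tg] gK hK | g h _ [sg tg] gh].
- exact: tree_morphism_aact.
- exact: tree_morphism_iotan.
- by split=> [x | k x] /=; rewrite ?sg ?sh // tg th.
- split=> [x | k x]; first by rewrite -(sg (h x)) hK.
  by apply: (can_inj gK); rewrite -tg !hK.
- by split=> [x | k x]; rewrite -!gh.
Qed.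

Lemma pref_cat w a b : pref w (a + b) = pref w a ++ [seq w i | i <- iota a b].
Proof. by rewrite /pref /mkseq iotaD map_cat. Qed.

Lemma pref_nseq (w : infword) k : (forall i, (i < k)%N -> w i) -> pref w k = nseq k true.
Proof.
move=> w_true; rewrite /pref -{2}(size_mkseq w k); apply/all_pred1P.
by apply/allP => b /mapP[i]; rewrite mem_iota => /andP[_ ik] ->; rewrite /= w_true.
Qed.

Definition germ_match (s s' : triple) (x : seq bool) : Prop :=
  exists e e', [/\ x = t_mu s ++ e, x = t_mu s' ++ e',
    t_eta s ++ t_g s e = t_eta s' ++ t_g s' e' & restr (t_g s) e =1 restr (t_g s') e'].

Lemma germ_eq_match r r' : germ_eq r r' -> exists k, germ_match r.1 r'.1 (pref r.2 k).
Proof. by case=> _ [k [e [e' [? [? [? ?]]]]]]; exists k, e, e'. Qed.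

Lemma germ_match_cat s s' x d :
  tree_morphism (t_g s) -> tree_morphism (t_g s') ->
  germ_match s s' x -> germ_match s s' (x ++ d).
Proof.
move=> Ts Ts' [e [e' [-> xe' eq_val eq_restr]]].
exists (e ++ d), (e' ++ d); split.
- by rewrite catA.
- by rewrite xe' catA.
- by rewrite (tree_morphism_cat _ _ Ts) (tree_morphism_cat _ _ Ts') !catA eq_val eq_restr.
- by move=> u; rewrite !restr_cat eq_restr.
Qed.

Lemma germ_match_pref s s' w k k' :
  tree_morphism (t_g s) -> tree_morphism (t_g s') -> (k <= k')%N ->
  germ_match s s' (pref w k) -> germ_match s s' (pref w k').
Proof. by move=> Ts Ts' /subnKC <-; rewrite pref_cat; apply: germ_match_cat. Qed.

Lemma germ_match_trans s s1 s2 x :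
  germ_match s s1 x -> germ_match s s2 x -> germ_match s1 s2 x.
Proof.
move=> [e [e1 [xe xe1 val1 restr1]]] [f [e2 [xf xe2 val2 restr2]]].
have ef : e = f.
  by move: xf; rewrite xe => /(congr1 (drop (size (t_mu s)))); rewrite !drop_size_cat.
exists e1, e2; split=> //; first by rewrite -val1 ef val2.
by move=> u; rewrite -restr1 ef restr2.
Qed.

Definition agree_at (g h : seq bool -> seq bool) (x : seq bool) : Prop :=
  g x = h x /\ restr g x =1 restr h x.

Lemma germ_match_agree g h x :
  germ_match (Triple [::] g [::]) (Triple [::] h [::]) x -> agree_at g h x.
Proof. by case=> e [e' [/= -> /= -> eq_val eq_restr]]. Qed.

Definition eventually_agree (w : infword) (g h : seq bool -> seq bool) : Prop :=
  exists K, forall k, (K <= k)%N -> agree_at g h (pref w k).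

Lemma eventually_agree_eqr w g h h' :
  h =1 h' -> eventually_agree w g h -> eventually_agree w g h'.
Proof.
move=> eq_h [K agree_h]; exists K => k /agree_h[eq_val eq_restr].
by split=> [|u]; rewrite ?eq_val ?eq_restr /restr eq_h.
Qed.

Lemma germs_eventually_agree (r : germrep) g h w1 w2 :
  tree_morphism (t_g r.1) -> tree_morphism g -> tree_morphism h ->
  germ_eq r (Triple [::] g [::], w1) -> germ_eq r (Triple [::] h [::], w2) ->
  eventually_agree r.2 g h.
Proof.
move=> Tr Tg Th /germ_eq_match[k1 match1] /germ_eq_match[k2 match2].
exists (maxn k1 k2) => k; rewrite geq_max => /andP[k1k k2k].
apply: germ_match_agree; apply: (@germ_match_trans r.1).
  exact: germ_match_pref k1k match1.
exact: germ_match_pref k2k match2.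
Qed.

Section IotaOnRays.
Variables (F : finFieldType) (n : nat) (alpha : F).

Lemma iotan_nseq b p x :
  iotan n alpha b (nseq p true ++ x) = nseq p true ++ iotan n alpha (alpha ^+ p * b) x.
Proof.
elim: p b => [|p IH] b /=; first by rewrite expr0 mul1r.
by rewrite IH mulrA -exprSr.
Qed.

Lemma iotan_nseq_false b p c v :
  iotan n alpha b (nseq p true ++ false :: c :: v) =
  nseq p true ++ false :: ((tr n (alpha ^+ p * b) == 1) (+) c) :: v.
Proof. by rewrite iotan_nseq /=; case: (_ == 1). Qed.

Lemma iotan_eq_tr b g p c v :
  iotan n alpha b (nseq p true ++ false :: c :: v) =
  iotan n alpha g (nseq p true ++ false :: c :: v) ->
  (tr n (alpha ^+ p * b) == 1) = (tr n (alpha ^+ p * g) == 1).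
Proof.
by rewrite !iotan_nseq_false => /eqP; rewrite eqseq_cat // => /andP[_ /eqP[/addIb]].
Qed.

Lemma restr_iotan_nseq b k :
  restr (iotan n alpha b) (nseq k true) =1 iotan n alpha (alpha ^+ k * b).
Proof. by move=> u; rewrite /restr iotan_nseq size_nseq drop_size_cat ?size_nseq. Qed.

Lemma eventually_agree_iotan_tr (N : nat) :
  (0 < N)%N -> alpha ^+ N = 1 -> forall w : infword, exists q, forall b g,
    eventually_agree w (iotan n alpha b) (iotan n alpha g) ->
    (tr n (alpha ^+ q * b) == 1) = (tr n (alpha ^+ q * g) == 1).
Proof.
move=> N_gt0 alphaN w; case: (classic (exists p, ~~ w p)) => [w_false | w_true].
  case: (ex_minnP w_false) => p wp p_min; exists p => b g [K agree_w].
  have w_true i : (i < p)%N -> w i.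
    by move=> ip; apply/negPn/negP => /p_min; rewrite leqNgt ip.
  have /subnKC pref_split := leq_maxr K p.+2.
  have [eq_val _] := agree_w _ (leq_maxl K p.+2).
  move: eq_val; rewrite -pref_split -addn2 !pref_cat pref_nseq //= (negbTE wp) -catA.
  exact: iotan_eq_tr.
exists 0%N => b g [K agree_w].
have [_ eq_restr] := agree_w _ (leq_pmulr K N_gt0).
have := eq_restr [:: false; false].
rewrite pref_nseq; last by move=> i _; apply/negPn/negP => wi; apply: w_true; exists i.
rewrite !restr_iotan_nseq mulnC exprM alphaN expr1n => /(iotan_eq_tr (p := 0)).
by rewrite expr0 !mul1r.
Qed.

End IotaOnRays.

Theorem mainTheorem5
  (n : nat) (hn : (2 <= n)%N)
  (F : finFieldType) (hF : #|F| = (2 ^ n)%N)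
  (alpha : F) (halpha : (2 ^ n).-1.-primitive_root alpha)
  (m : nat) (hm : (1 <= m)%N)
  (j : nat) (hj : (j <= 2 ^ n - 2)%N)
  (Kb : pred F)
  (hK : Kb =1 Hset n alpha j \/ Kb =1 predC (Hset n alpha j)) :
  let inK := fun g : seq bool -> seq bool =>
               exists b, Kb b /\ g =1 iotan n alpha b in
  let inInter := fun r : germrep =>
               forall g, inK g -> inU m g r in
  let inM := fun r : germrep =>
               inInter r /\
               ~ (exists h, inN0 n alpha h /\ ~ inK h /\ inU m h r) in
  forall r : germrep, valid_germ (inG n alpha) r -> (inM r <-> inInter r).
Proof.
move=> inK inInter inM r [r_inG _]; split=> [[] // | r_inter]; split=> //.
move=> [h [[g h_g] [h_notK [w2 [_ germ_h]]]]].
have n_gt0 : (0 < n)%N := ltnW hn.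
have N_gt0 : (0 < (2 ^ n).-1)%N by rewrite -ltnS prednK ?expn_gt0 // (ltn_exp2l 0).
have alpha_pow_neq0 k : alpha ^+ k != 0 by rewrite expf_neq0 // (prim_root_eq0 halpha) -lt0n.
have [c Kb_c] : exists c, Kb =1 (fun b => (tr n (alpha ^+ j * b) == 1) == c).
  by case: hK => Kb_eq; [exists false | exists true] => b;
    rewrite Kb_eq /= /Hset tr_eq0 //; case: (_ == 1).
have [q agree_tr] := eventually_agree_iotan_tr n N_gt0 (prim_expr_order halpha) r.2.
have h_tree : tree_morphism h.
  by apply: (tree_morphism_inG (G_ext (@G_iota F n alpha g) _)) => x; rewrite h_g.
apply: (tr_form_not_const_on_level n_gt0 hF (alpha_pow_neq0 j) (alpha_pow_neq0 q) (c := c)).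
  by apply/negP => /eqP g_c; apply: h_notK; exists g; rewrite Kb_c g_c eqxx.
move=> b b_c; apply/agree_tr/(eventually_agree_eqr h_g).
have [w1 [_ germ_b]] : inU m (iotan n alpha b) r.
  by apply: r_inter; exists b; rewrite Kb_c b_c eqxx.
exact: germs_eventually_agree (tree_morphism_inG r_inG)
  (tree_morphism_iotan n alpha b) h_tree germ_b germ_h.
Qed.
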